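(* Let $p>3$ be a prime and $E$ a supersingular elliptic curve over $\mathbb{F}_{p^2}$ whose endomorphism ring corresponds under the Brandt--Sohn correspondence to a ternary quadratic form $F$ of discriminant $p$ (i.e. $\operatorname{End}(E)\cong\operatorname{Clf}^0(F)$). Let $c$ be a prime with $c<3p/16$. Then $F$ properly represents $2c$ if and only if $E$ is $\mathbb{Z}[\sqrt{-cp}]$-oriented or $\mathbb{Z}[\frac{1+\sqrt{-cp}}{2}]$-oriented.
   Context: For an imaginary quadratic order $O$, $E$ is $O$-oriented if there is an injective ring homomorphism $O\hookrightarrow\operatorname{End}(E)$ (for $O=\mathbb{Z}[\sqrt{-cp}]$ or $\mathbb{Z}[\frac{1+\sqrt{-cp}}2]$ this is equivalent to the existence of a $c$-isogeny $E\to E^p$, where $E^p$ is obtained by raising the coefficients of $E$ to the $p$-th power). Write $F(x,y,z)=2ax^2+2by^2+2cz^2+2uyz+2vxz+2wxy$ (integers), with discriminant $4abc+uvw-au^2-bv^2-cw^2$. $\operatorname{Clf}^0(F)=\mathbb{Z}+\mathbb{Z}i+\mathbb{Z}j+\mathbb{Z}k\subset B_{p,\infty}$ with $i^2=ui-bc$, $j^2=vj-ac$, $k^2=wk-ab$, $jk=a(u-i)$, $ki=b(v-j)$, $ij=c(w-k)$; $B_{p,\infty}$ is the quaternion algebra over $\mathbb{Q}$ ramified exactly at $p,\infty$. $F$ properly represents $n$ if $F(v)=n$ for some $v\in\mathbb{Z}^3$ with coprime entries. *)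

From mathcomp Require Import all_boot all_order all_algebra.
Set Implicit Arguments. Unset Strict Implicit. Unset Printing Implicit Defensive.
Import Order.TTheory GRing.Theory Num.Theory.
Local Open Scope ring_scope.

Record tform := TForm { fa : int; fb : int; fc : int; fu : int; fv : int; fw : int }.

Definition tform_eval (F : tform) (x y z : int) : int :=
  2 * fa F * x ^+ 2 + 2 * fb F * y ^+ 2 + 2 * fc F * z ^+ 2
  + 2 * fu F * y * z + 2 * fv F * x * z + 2 * fw F * x * y.

Definition tform_disc (F : tform) : int :=
  4 * fa F * fb F * fc F + fu F * fv F * fw F
  - fa F * fu F ^+ 2 - fb F * fv F ^+ 2 - fc F * fw F ^+ 2.

Definition tform_posdef (F : tform) : Prop :=
  forall x y z : int, (x, y, z) != (0, 0, 0) -> 0 < tform_eval F x y z.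

Definition properly_represents (F : tform) (n : int) : Prop :=
  exists x y z : int, gcdz (gcdz x y) z = 1 /\ tform_eval F x y z = n.

(* ---- The even Clifford algebra Clf^0(F) = Z + Zi + Zj + Zk ----
   An element (r, s, t, q) stands for r + s i + t j + q k.  Multiplication
   is the bilinear extension of
     i^2 = u i - bc,  j^2 = v j - ac,  k^2 = w k - ab,
     jk = a(u - i),   ki = b(v - j),   ij = c(w - k),
   together with the remaining products they force (conjugation rules):
     kj = -vw + a i + w j + v k,  ik = -uw + w i + b j + u k,
     ji = -uv + v i + u j + c k. *)
Definition clf := (int * int * int * int)%type.

Definition clf_add (x y : clf) : clf :=
  let: (r1, s1, t1, q1) := x in let: (r2, s2, t2, q2) := y in
  (r1 + r2, s1 + s2, t1 + t2, q1 + q2).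

Definition clf_scale (k : int) (x : clf) : clf :=
  let: (r, s, t, q) := x in (k * r, k * s, k * t, k * q).

Definition clf_one : clf := (1, 0, 0, 0).

Definition clf_mul (F : tform) (x y : clf) : clf :=
  let a := fa F in let b := fb F in let c := fc F in
  let u := fu F in let v := fv F in let w := fw F in
  let ii : clf := (- (b * c), u, 0, 0) in
  let jj : clf := (- (a * c), 0, v, 0) in
  let kk : clf := (- (a * b), 0, 0, w) in
  let jk : clf := (a * u, - a, 0, 0) in
  let ki : clf := (b * v, 0, - b, 0) in
  let ij : clf := (c * w, 0, 0, - c) in
  let kj : clf := (- (v * w), a, w, v) in
  let ik : clf := (- (u * w), w, b, u) in
  let ji : clf := (- (u * v), v, u, c) in
  let: (r1, s1, t1, q1) := x in let: (r2, s2, t2, q2) := y in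
  let sum := fun l : seq clf => foldr clf_add (0, 0, 0, 0) l in
  sum [:: clf_scale r1 y; clf_scale r2 (0, s1, t1, q1);
          clf_scale (s1 * s2) ii; clf_scale (s1 * t2) ij; clf_scale (s1 * q2) ik;
          clf_scale (t1 * s2) ji; clf_scale (t1 * t2) jj; clf_scale (t1 * q2) jk;
          clf_scale (q1 * s2) ki; clf_scale (q1 * t2) kj; clf_scale (q1 * q2) kk].

(* Z[sqrt(-D)]: (x, y) stands for x + y sqrt(-D). *)
Definition zsqrt_mul (D : int) (x y : int * int) : int * int :=
  (x.1 * y.1 - D * x.2 * y.2, x.1 * y.2 + x.2 * y.1).

(* Z[(1 + sqrt(-D))/2] (a ring only when D = 3 mod 4): (x, y) stands for
   x + y omega with omega^2 = omega - (1 + D)/4. *)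
Definition zomega_mul (D : int) (x y : int * int) : int * int :=
  (x.1 * y.1 - ((1 + D) %/ 4)%Z * x.2 * y.2, x.1 * y.2 + x.2 * y.1 + x.2 * y.2).

Definition pair_add (x y : int * int) : int * int := (x.1 + y.1, x.2 + y.2).

Definition inj_ring_hom_into_clf (F : tform) (mul : int * int -> int * int -> int * int)
    (f : int * int -> clf) : Prop :=
  [/\ f (1, 0) = clf_one,
      forall x y, f (pair_add x y) = clf_add (f x) (f y),
      forall x y, f (mul x y) = clf_mul F (f x) (f y)
    & injective f].

Definition oriented_sqrt (F : tform) (D : int) : Prop :=
  exists f, inj_ring_hom_into_clf F (zsqrt_mul D) f.

Definition oriented_omega (F : tform) (D : int) : Prop :=
  (D %% 4 = 3)%Z /\ exists f, inj_ring_hom_into_clf F (zomega_mul D) f.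

From mathcomp Require Import all_boot all_order all_algebra.
From mathcomp Require Import zify ring.
Set Implicit Arguments. Unset Strict Implicit. Unset Printing Implicit Defensive.
Import Order.TTheory GRing.Theory Num.Theory.
Local Open Scope ring_scope.

(** Let M be the Gram matrix of F, so that det M = 2 disc F = 2p.
    If F(x) = 2n, the element of Clf^0(F) with pure part M x and reduced trace
    0 has reduced norm n p, hence squares to -n p; sending sqrt(-cp) to it
    embeds Z[sqrt(-cp)].
    Conversely, the image of sqrt(-cp) (resp. of omega) has reduced trace 0
    and norm cp (resp. trace 1 and norm (1 + cp)/4), so its pure part b has
    G(b) = 4 nrd - trd^2 = k^2 c p with k = 2 (resp. k = 1), where G is the
    adjoint form of F.  The vector y = adj(M) b satisfies
    F(y) = 2 disc(F) G(b) = 2c (kp)^2, and the cofactor identities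
    y_i^2 = A_ii G(b) - p B_i(b) show that p divides every y_i; so does k,
    since y = trd(b) (u, v, w) mod 2.  Thus F(y / kp) = 2c, and such a
    representation is proper because c is prime. *)

Definition clf_of_int (n : int) : clf := (n, 0, 0, 0).

Definition clf_scalar (x : clf) : Prop := exists n, x = clf_of_int n.

Section ReducedTraceNorm.
Variable F : tform.
Local Notation a := (fa F). Local Notation b := (fb F). Local Notation c := (fc F).
Local Notation u := (fu F). Local Notation v := (fv F). Local Notation w := (fw F).

Definition pure_trd (s t q : int) : int := u * s + v * t + w * q.

Definition pure_nrd (s t q : int) : int :=
  b * c * s ^+ 2 + a * c * t ^+ 2 + a * b * q ^+ 2 + (u * v - c * w) * s * t
  + (u * w - b * v) * s * q + (v * w - a * u) * t * q.

Definition clf_trd (x : clf) : int :=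
  let: (r, s, t, q) := x in 2 * r + pure_trd s t q.

Definition clf_nrd (x : clf) : int :=
  let: (r, s, t, q) := x in r ^+ 2 + r * pure_trd s t q + pure_nrd s t q.

Definition dual_form (s t q : int) : int := 4 * pure_nrd s t q - pure_trd s t q ^+ 2.

Lemma clf_discE r s t q :
  4 * clf_nrd (r, s, t, q) - clf_trd (r, s, t, q) ^+ 2 = dual_form s t q.
Proof. by rewrite /dual_form /=; ring. Qed.

Lemma clf_mul_sqr x :
  clf_mul F x x = clf_add (clf_scale (clf_trd x) x) (clf_of_int (- clf_nrd x)).
Proof.
case: x => [[[r s] t] q]; rewrite /clf_mul /= /pure_trd /pure_nrd.
by congr (_, _, _, _); ring.
Qed.

Lemma clf_mul_int_add_scale x m1 m2 n1 n2 :
  clf_mul F (clf_add (clf_of_int m1) (clf_scale m2 x))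
            (clf_add (clf_of_int n1) (clf_scale n2 x)) =
  clf_add (clf_of_int (m1 * n1))
    (clf_add (clf_scale (m1 * n2 + m2 * n1) x) (clf_scale (m2 * n2) (clf_mul F x x))).
Proof. by case: x => [[[r s] t] q]; rewrite /clf_mul /=; congr (_, _, _, _); ring. Qed.

Lemma clf_quadratic_relation x k l :
  ~ clf_scalar x -> clf_mul F x x = clf_add (clf_scale k x) (clf_of_int l) ->
  clf_trd x = k /\ clf_nrd x = - l.
Proof.
rewrite clf_mul_sqr; case: x => [[[r s] t] q] /= x_nscal [eq_r eq_s eq_t eq_q].
have trd_k : 2 * r + pure_trd s t q = k.
  have [//|trd_neq_k] := eqVneq (2 * r + pure_trd s t q) k; case: x_nscal.
  have pure0 (y : int) : (2 * r + pure_trd s t q) * y + 0 = k * y + 0 -> y = 0.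
    rewrite !addr0 => /eqP; rewrite -subr_eq0 -mulrBl mulf_eq0 subr_eq0.
    by rewrite (negbTE trd_neq_k) => /eqP.
  by exists r; rewrite /clf_of_int (pure0 _ eq_s) (pure0 _ eq_t) (pure0 _ eq_q).
by split=> //; move: eq_r; rewrite trd_k; lia.
Qed.

(* Pure part M (x, y, z) for the Gram matrix M of F; the scalar part makes the
   reduced trace vanish. *)
Definition clf_of_vec (x y z : int) : clf :=
  (- (a * u * x + b * v * y + c * w * z + u * w * y + u * v * z + v * w * x),
   2 * a * x + w * y + v * z, w * x + 2 * b * y + u * z, v * x + u * y + 2 * c * z).

Lemma clf_trd_of_vec x y z : clf_trd (clf_of_vec x y z) = 0.
Proof. by rewrite /= /pure_trd; ring. Qed.

Lemma clf_nrd_of_vec x y z :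
  2 * clf_nrd (clf_of_vec x y z) = tform_disc F * tform_eval F x y z.
Proof. by rewrite /= /pure_trd /pure_nrd /tform_disc /tform_eval; ring. Qed.

Lemma clf_of_vec_nscalar x y z :
  tform_eval F x y z != 0 -> ~ clf_scalar (clf_of_vec x y z).
Proof.
move=> Fx_neq0 [r [_ S1 S2 S3]]; move: Fx_neq0.
have -> : tform_eval F x y z = x * (2 * a * x + w * y + v * z)
  + y * (w * x + 2 * b * y + u * z) + z * (v * x + u * y + 2 * c * z).
  by rewrite /tform_eval; ring.
by rewrite S1 S2 S3 !mulr0 !addr0 eqxx.
Qed.

End ReducedTraceNorm.

Section Adjugate.
Variable F : tform.
Local Notation a := (fa F). Local Notation b := (fb F). Local Notation c := (fc F).
Local Notation u := (fu F). Local Notation v := (fv F). Local Notation w := (fw F).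

(* The cofactor matrix adj(M) of the Gram matrix M of F applied to (s, t, q);
   dual_form is the quadratic form of adj(M), and M adj(M) = 2 disc(F). *)
Definition dual_adj (s t q : int) : int * int * int :=
  ((4 * b * c - u ^+ 2) * s + (u * v - 2 * c * w) * t + (u * w - 2 * b * v) * q,
   (u * v - 2 * c * w) * s + (4 * a * c - v ^+ 2) * t + (v * w - 2 * a * u) * q,
   (u * w - 2 * b * v) * s + (v * w - 2 * a * u) * t + (4 * a * b - w ^+ 2) * q).

Lemma tform_eval_dual_adj s t q x1 x2 x3 : dual_adj s t q = (x1, x2, x3) ->
  tform_eval F x1 x2 x3 = 2 * tform_disc F * dual_form F s t q.
Proof.
by case=> <- <- <-; rewrite /tform_eval /tform_disc /dual_form /pure_nrd /pure_trd; ring.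
Qed.

Lemma dvdz_dual_adj_sqr s t q x1 x2 x3 : dual_adj s t q = (x1, x2, x3) ->
  (tform_disc F %| dual_form F s t q)%Z ->
  [/\ (tform_disc F %| x1 ^+ 2)%Z, (tform_disc F %| x2 ^+ 2)%Z
    & (tform_disc F %| x3 ^+ 2)%Z].
Proof.
case=> <- <- <- dG; set d := tform_disc F; set G := dual_form F s t q.
have dvd_comb A B : (d %| A * G - d * B)%Z := rpredB (dvdz_mull A dG) (dvdz_mulr B (dvdzz d)).
split.
- rewrite (_ : _ ^+ 2 = (4 * b * c - u ^+ 2) * G
                       - d * (4 * c * t ^+ 2 - 4 * u * t * q + 4 * b * q ^+ 2)) ?dvd_comb //.
  by rewrite /G /d /tform_disc /dual_form /pure_nrd /pure_trd; ring.
- rewrite (_ : _ ^+ 2 = (4 * a * c - v ^+ 2) * G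
                       - d * (4 * c * s ^+ 2 - 4 * v * s * q + 4 * a * q ^+ 2)) ?dvd_comb //.
  by rewrite /G /d /tform_disc /dual_form /pure_nrd /pure_trd; ring.
- rewrite (_ : _ ^+ 2 = (4 * a * b - w ^+ 2) * G
                       - d * (4 * b * s ^+ 2 - 4 * w * s * t + 4 * a * t ^+ 2)) ?dvd_comb //.
  by rewrite /G /d /tform_disc /dual_form /pure_nrd /pure_trd; ring.
Qed.

Lemma dual_adj_even s t q x1 x2 x3 : dual_adj s t q = (x1, x2, x3) ->
  (2 %| pure_trd F s t q)%Z -> [/\ (2 %| x1)%Z, (2 %| x2)%Z & (2 %| x3)%Z].
Proof.
case=> <- <- <- T_even.
have even_shift k e x : x = k * pure_trd F s t q + e * 2 -> (2 %| x)%Z.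
  by move=> ->; rewrite rpredD ?dvdz_mull ?dvdz_mull.
split.
- apply: (even_shift u (2 * b * c * s - u ^+ 2 * s - c * w * t - b * v * q)).
  by rewrite /pure_trd; ring.
- apply: (even_shift v (2 * a * c * t - v ^+ 2 * t - c * w * s - a * u * q)).
  by rewrite /pure_trd; ring.
- apply: (even_shift w (2 * a * b * q - w ^+ 2 * q - b * v * s - a * u * t)).
  by rewrite /pure_trd; ring.
Qed.

End Adjugate.

Section OrderEmbedding.
Variables (F : tform) (mul : int * int -> int * int -> int * int) (f : int * int -> clf).
Hypothesis f_hom : inj_ring_hom_into_clf F mul f.

Lemma inj_ring_hom_int n : f (n, 0) = clf_of_int n.
Proof.
case: f_hom => f1 fD _ _.
have f_succ m : f (m + 1, 0) = clf_add (f (m, 0)) (clf_of_int 1).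
  by rewrite -[clf_of_int 1]/clf_one -f1 -fD /pair_add /= addr0.
have f0 : f (0, 0) = clf_of_int 0.
  have := fD (0, 0) (0, 0); rewrite /pair_add /= addr0.
  by case: (f (0, 0)) => [[[r s] t] q] [] *; congr (_, _, _, _); lia.
elim/int_rect: n => [//|n IH|n IH].
  by rewrite intS addrC f_succ IH /clf_of_int /= !addr0 addrC.
move: (f_succ (- n.+1%:Z)); rewrite (_ : _ + 1 = - n%:Z) ?IH; last lia.
by case: (f (_, 0)) => [[[r s] t] q] /= [] *; rewrite /clf_of_int; congr (_, _, _, _); lia.
Qed.

Lemma inj_ring_hom_gen_nscalar : ~ clf_scalar (f (0, 1)).
Proof.
case: f_hom => _ _ _ f_inj [n f_gen].
by move: f_gen; rewrite -inj_ring_hom_int => /f_inj [].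
Qed.

End OrderEmbedding.

Lemma zsqrt_hom_trd_nrd F D f : inj_ring_hom_into_clf F (zsqrt_mul D) f ->
  clf_trd F (f (0, 1)) = 0 /\ clf_nrd F (f (0, 1)) = D.
Proof.
move=> f_hom; rewrite -[D]opprK.
apply: clf_quadratic_relation (inj_ring_hom_gen_nscalar f_hom) _.
case: (f_hom) => _ _ fM _; rewrite -fM.
have -> : zsqrt_mul D (0, 1) (0, 1) = (- D, 0) by rewrite /zsqrt_mul /=; congr (_, _); ring.
rewrite (inj_ring_hom_int f_hom).
by case: (f (0, 1)) => [[[r s] t] q]; rewrite /clf_of_int /=; congr (_, _, _, _); ring.
Qed.

Lemma zomega_hom_trd_nrd F D f : (D %% 4 = 3)%Z ->
  inj_ring_hom_into_clf F (zomega_mul D) f ->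
  clf_trd F (f (0, 1)) = 1 /\ 4 * clf_nrd F (f (0, 1)) = 1 + D.
Proof.
move=> D_mod4 f_hom; set m := ((1 + D) %/ 4)%Z.
have -> : 1 + D = 4 * m by rewrite /m; lia.
suff [-> ->] : clf_trd F (f (0, 1)) = 1 /\ clf_nrd F (f (0, 1)) = - - m by rewrite opprK.
apply: clf_quadratic_relation (inj_ring_hom_gen_nscalar f_hom) _.
case: (f_hom) => _ fD fM _; rewrite -fM.
have -> : zomega_mul D (0, 1) (0, 1) = pair_add (- m, 0) (0, 1).
  by rewrite /zomega_mul /pair_add /=; congr (_, _); ring.
rewrite fD (inj_ring_hom_int f_hom).
by case: (f (0, 1)) => [[[r s] t] q]; rewrite /clf_of_int /=; congr (_, _, _, _); ring.
Qed.

Lemma oriented_sqrt_of_sqr F D x :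
  ~ clf_scalar x -> clf_mul F x x = clf_of_int (- D) -> oriented_sqrt F D.
Proof.
move=> x_nscal x_sqr.
exists (fun m => clf_add (clf_of_int m.1) (clf_scale m.2 x)); split.
- by case: x {x_nscal x_sqr} => [[[r s] t] q]; rewrite /clf_of_int /=; congr (_, _, _, _); ring.
- move=> [m1 m2] [n1 n2]; case: x {x_nscal x_sqr} => [[[r s] t] q].
  by rewrite /clf_of_int /=; congr (_, _, _, _); ring.
- move=> [m1 m2] [n1 n2]; rewrite clf_mul_int_add_scale x_sqr /=.
  by case: x {x_nscal x_sqr} => [[[r s] t] q]; rewrite /clf_of_int /=; congr (_, _, _, _); ring.
- move=> [m1 m2] [n1 n2] /=; have [<-|m2_neq_n2] := eqVneq m2 n2.
    by case: x {x_nscal x_sqr} => [[[r s] t] q] /= [/addIr ->].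
  move=> eq_im; case: x_nscal; move: eq_im.
  case: x {x_sqr} => [[[r s] t] q] /= [_ /addrI eq_s /addrI eq_t /addrI eq_q].
  have pure0 (y : int) : m2 * y = n2 * y -> y = 0.
    by move/eqP; rewrite -subr_eq0 -mulrBl mulf_eq0 subr_eq0 (negbTE m2_neq_n2) => /eqP.
  by exists r; rewrite /clf_of_int (pure0 _ eq_s) (pure0 _ eq_t) (pure0 _ eq_q).
Qed.

Lemma tform_eval_scale F x y z n :
  tform_eval F (x * n) (y * n) (z * n) = n ^+ 2 * tform_eval F x y z.
Proof. by rewrite /tform_eval; ring. Qed.

Lemma tform_eval_divz F x y z n m : n != 0 ->
  [/\ (n %| x)%Z, (n %| y)%Z & (n %| z)%Z] -> tform_eval F x y z = n ^+ 2 * m ->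
  tform_eval F (x %/ n)%Z (y %/ n)%Z (z %/ n)%Z = m.
Proof.
move=> n_neq0 [/divzK {1}<- /divzK {1}<- /divzK {1}<-].
by rewrite tform_eval_scale => /mulfI; apply; rewrite expf_neq0.
Qed.

Lemma sqr_dvdn_prime c n : prime c -> (n ^ 2 %| c)%N -> n = 1%N.
Proof.
move=> c_prime n2_dvd_c.
have n_dvd_c : (n %| c)%N by apply: dvdn_trans n2_dvd_c; apply: dvdn_mulr.
case/primeP: c_prime => c_gt1 /(_ n n_dvd_c) /orP [/eqP // | /eqP n_c].
by have := dvdn_leq (ltnW c_gt1) n2_dvd_c; rewrite n_c; nia.
Qed.

Lemma prime_dvdz_sqr (p : nat) x : prime p -> (p%:Z %| x ^+ 2)%Z -> (p%:Z %| x)%Z.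
Proof. by move=> p_prime; rewrite !dvdzE abszX /= Euclid_dvdX // andbT. Qed.

Lemma properly_represents_2prime F (c : nat) x y z :
  prime c -> tform_eval F x y z = 2 * c%:Z -> properly_represents F (2 * c%:Z).
Proof.
move=> c_prime Fx; exists x, y, z; split=> //.
set g := gcdz (gcdz x y) z.
have /dvdzP [x' Ex] : (g %| x)%Z := dvdz_trans (dvdz_gcdl _ _) (dvdz_gcdl _ _).
have /dvdzP [y' Ey] : (g %| y)%Z := dvdz_trans (dvdz_gcdl _ _) (dvdz_gcdr _ _).
have /dvdzP [z' Ez] : (g %| z)%Z := dvdz_gcdr _ _.
have : (g ^+ 2 %| c%:Z)%Z.
  apply/dvdzP; exists (fa F * x' ^+ 2 + fb F * y' ^+ 2 + fc F * z' ^+ 2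
    + fu F * y' * z' + fv F * x' * z' + fw F * x' * y').
  by apply: (@mulfI _ 2) => //; rewrite -Fx Ex Ey Ez /tform_eval; ring.
by rewrite dvdzE abszX /g /gcdz /= => /(sqr_dvdn_prime c_prime) ->.
Qed.

Lemma properly_represents_of_dual F (p c : nat) k s t q x1 x2 x3 :
  prime p -> prime c -> tform_disc F = p%:Z -> coprimez k p%:Z ->
  dual_adj F s t q = (x1, x2, x3) -> dual_form F s t q = k ^+ 2 * (c%:Z * p%:Z) ->
  [/\ (k %| x1)%Z, (k %| x2)%Z & (k %| x3)%Z] -> properly_represents F (2 * c%:Z).
Proof.
move=> p_prime c_prime disc_p k_p_coprime adj_x G_eq [k_x1 k_x2 k_x3].
have p_dvd_G : (tform_disc F %| dual_form F s t q)%Z.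
  by rewrite G_eq disc_p; apply/dvdz_mull/dvdz_mull/dvdzz.
have [p_x1 p_x2 p_x3] := dvdz_dual_adj_sqr adj_x p_dvd_G.
rewrite disc_p in p_x1 p_x2 p_x3.
have kp_dvd x : (k %| x)%Z -> (p%:Z %| x ^+ 2)%Z -> (k * p%:Z %| x)%Z.
  by move=> k_x /(prime_dvdz_sqr p_prime) p_x; rewrite Gauss_dvdz // k_x p_x.
have kp_x : [/\ (k * p%:Z %| x1)%Z, (k * p%:Z %| x2)%Z & (k * p%:Z %| x3)%Z].
  by split; apply: kp_dvd.
have p_neq0 : p%:Z != 0 by rewrite eqz_nat -lt0n prime_gt0.
have k_neq0 : k != 0.
  by apply: contraTneq k_p_coprime => ->; rewrite coprimezE /coprime gcd0n gtn_eqF ?prime_gt1.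
apply: (properly_represents_2prime c_prime (tform_eval_divz (mulf_neq0 k_neq0 p_neq0) kp_x _)).
by rewrite (tform_eval_dual_adj adj_x) disc_p G_eq; ring.
Qed.

Lemma properly_represents_of_oriented_sqrt F (p c : nat) :
  prime p -> (2 < p)%N -> prime c -> tform_disc F = p%:Z ->
  oriented_sqrt F (c%:Z * p%:Z) -> properly_represents F (2 * c%:Z).
Proof.
move=> p_prime p_gt2 c_prime disc_p [f f_hom].
have [] := zsqrt_hom_trd_nrd f_hom; case: (f (0, 1)) => [[[r s] t] q] trd0 nrd_cp.
case adj_x: (dual_adj F s t q) => [[x1 x2] x3].
apply: (properly_represents_of_dual (k := 2) p_prime c_prime disc_p _ adj_x).
- by rewrite coprimezE /= coprime2n; case: (even_prime p_prime) p_gt2 => [->|].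
- by rewrite -(clf_discE F r) trd0 nrd_cp; ring.
apply: (dual_adj_even adj_x); apply/dvdzP; exists (- r).
by move: trd0 => /= /eqP; rewrite addrC addr_eq0 => /eqP ->; ring.
Qed.

Lemma properly_represents_of_oriented_omega F (p c : nat) :
  prime p -> prime c -> tform_disc F = p%:Z ->
  oriented_omega F (c%:Z * p%:Z) -> properly_represents F (2 * c%:Z).
Proof.
move=> p_prime c_prime disc_p [D_mod4 [f f_hom]].
have [] := zomega_hom_trd_nrd D_mod4 f_hom; case: (f (0, 1)) => [[[r s] t] q] trd1 nrd_D.
case adj_x: (dual_adj F s t q) => [[x1 x2] x3].
apply: (properly_represents_of_dual (k := 1) p_prime c_prime disc_p _ adj_x).
- by rewrite coprimezE coprime1n.
- by rewrite -(clf_discE F r) trd1 nrd_D; ring.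
by split; apply: dvd1z.
Qed.

Lemma oriented_sqrt_of_represents F n x y z :
  n != 0 -> tform_eval F x y z = 2 * n -> oriented_sqrt F (n * tform_disc F).
Proof.
move=> n_neq0 Fx; apply: (@oriented_sqrt_of_sqr _ _ (clf_of_vec F x y z)).
  by apply: clf_of_vec_nscalar; rewrite Fx mulf_neq0.
rewrite clf_mul_sqr clf_trd_of_vec.
have -> : clf_nrd F (clf_of_vec F x y z) = n * tform_disc F.
  by apply: (@mulfI _ 2) => //; rewrite clf_nrd_of_vec Fx; ring.
by case: (clf_of_vec F x y z) => [[[r s] t] q]; rewrite /clf_of_int /=; congr (_, _, _, _); ring.
Qed.

Theorem mainTheorem6 (p c : nat) (F : tform) :
  prime p -> (3 < p)%N ->
  tform_posdef F -> tform_disc F = p%:Z ->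
  prime c -> (16 * c < 3 * p)%N ->
  properly_represents F (2 * c%:Z) <->
  (oriented_sqrt F (c%:Z * p%:Z) \/ oriented_omega F (c%:Z * p%:Z)).
Proof.
move=> p_prime p_gt3 _ disc_p c_prime _; split.
  case=> x [y [z [_ Fx]]]; left; rewrite -disc_p.
  by apply: oriented_sqrt_of_represents Fx; rewrite eqz_nat -lt0n prime_gt0.
case=> [orient | orient].
  exact: properly_represents_of_oriented_sqrt p_prime (ltnW p_gt3) c_prime disc_p orient.
exact: properly_represents_of_oriented_omega p_prime c_prime disc_p orient.
Qed.
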